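(* Let $\mathbf{c}\in\mathbb{R}^n$, $\mathcal{K}=\{1,\dots,K\}$ with $K\ge2$, and for each $k\in\mathcal{K}$ let $\mathcal{F}_k=\bigcup_{i\in\mathcal{D}_k}\mathcal{C}_{ki}$ with $\mathcal{D}_k$ finite and each $\mathcal{C}_{ki}\subset\mathbb{R}^n$ compact and convex. Let $$z^{HR}_{\mathcal{K}}=\inf\{\mathbf{c}^\top\mathbf{x}:\ \mathbf{x}=\mathbf{v}_k,\ \mathbf{v}_k\in\operatorname{cl}\operatorname{conv}(\mathcal{F}_k)\ \forall k\in\mathcal{K}\}$$ be the hull relaxation value and let $\boldsymbol{\lambda}_1^*,\dots,\boldsymbol{\lambda}_K^*$ be optimal Lagrange multipliers of this hull relaxation for the constraints $\mathbf{x}=\mathbf{v}_k$. For two disjunctions, which after relabeling are $k=K-1$ and $l=K$, let the basic step replace $\mathcal{F}_{K-1}$ and $\mathcal{F}_K$ by the single disjunction $\mathcal{F}_{K-1}\cap\mathcal{F}_K=\bigcup_{i\in\mathcal{D}_{K-1},\,j\in\mathcal{D}_K}(\mathcal{C}_{K-1,i}\cap\mathcal{C}_{K,j})$, and let $$z'=\inf\{\mathbf{c}^\top\mathbf{x}:\ \mathbf{x}\in\operatorname{cl}\operatorname{conv}(\mathcal{F}_k)\ \forall k\le K-2,\ \mathbf{x}\in\operatorname{cl}\operatorname{conv}(\mathcal{F}_{K-1}\cap\mathcal{F}_K)\}$$ be the hull relaxation value after the basic step, with bound improvement $\Delta(K-1,K)=z'-z^{HR}_{\mathcal{K}}$. Then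 $$\Delta(K-1,K)\ \ge\ L_{\{\{1\},\dots,\{K-2\},\{K-1,K\}\}}\big(\boldsymbol{\lambda}_1^*,\dots,\boldsymbol{\lambda}_{K-2}^*,\boldsymbol{\lambda}_{K-1}^*+\boldsymbol{\lambda}_K^*\big)-LR_{\mathcal{K}}(\boldsymbol{\lambda}_1^*,\dots,\boldsymbol{\lambda}_K^* )\ \ge\ 0.$$
   Context: $\operatorname{cl}\operatorname{conv}$ is the closed convex hull. Optimal Lagrange multipliers of the hull relaxation means: $z^{HR}_{\mathcal{K}}$ is finite and equals $\inf\{(\mathbf{c}-\sum_k\boldsymbol{\lambda}_k^* )^\top\mathbf{x}+\sum_k\boldsymbol{\lambda}_k^{*\top}\mathbf{v}_k:\mathbf{x}\in\mathbb{R}^n,\mathbf{v}_k\in\operatorname{cl}\operatorname{conv}(\mathcal{F}_k)\}$. The Lagrangian relaxation is $LR_{\mathcal{K}}(\boldsymbol{\lambda}_1,\dots,\boldsymbol{\lambda}_K)=\inf\{(\mathbf{c}-\sum_k\boldsymbol{\lambda}_k)^\top\mathbf{x}+\sum_k\boldsymbol{\lambda}_k^\top\mathbf{v}_k:\mathbf{x}\in\mathbb{R}^n,\ \mathbf{v}_k\in\mathcal{F}_k\ \forall k\}$. For a partition $\mathcal{P}=\{\mathcal{J}_1,\dots,\mathcal{J}_P\}$ of $\mathcal{K}$ and $\boldsymbol{\mu}_p\in\mathbb{R}^n$, the partition relaxation is $L_{\mathcal{P}}(\boldsymbol{\mu}_1,\dots,\boldsymbol{\mu}_P)=\sum_{p=1}^P\min\{\boldsymbol{\mu}_p^\top\mathbf{v}:\mathbf{v}\in\bigcap_{k\in\mathcal{J}_p}\mathcal{F}_k\}$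 (minimum over the empty set is $+\infty$). *)

From HB Require Import structures.
From mathcomp Require Import all_boot all_order all_algebra.
From mathcomp Require Import all_classical all_reals all_analysis.
Set Implicit Arguments. Unset Strict Implicit. Unset Printing Implicit Defensive.
Import Order.TTheory GRing.Theory Num.Theory.
Import numFieldNormedType.Exports.
Local Open Scope classical_set_scope.
Local Open Scope ring_scope.

Section Defs.
Variables (R : realType) (n : nat).
Notation vec := 'rV[R]_n.

Definition dotv (u v : vec) : R := \sum_(i < n) u 0 i * v 0 i.

Definition conv_hull (A : set vec) : set vec :=
  [set x | exists (m : nat) (w : 'I_m -> R) (p : 'I_m -> vec),
      (forall i, 0 <= w i) /\ \sum_(i < m) w i = 1 /\
      (forall i, A (p i)) /\ x = \sum_(i < m) w i *: p i].

Definition clconv (A : set vec) : set vec := closure (conv_hull A).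

(* the disjunctive set F_k = \bigcup_{i in D_k} C_{ki}, with D_k = 'I_(m k) *)
Definition disj (K : nat) (m : 'I_K -> nat)
  (C : forall k : 'I_K, 'I_(m k) -> set vec) (k : 'I_K) : set vec :=
  [set v | exists i : 'I_(m k), C k i v].

Definition zHR (K : nat) (c : vec) (F : 'I_K -> set vec) : \bar R :=
  ereal_inf [set e | exists (x : vec) (v : 'I_K -> vec),
     (forall k, x = v k /\ clconv (F k) (v k)) /\ e = (dotv c x)%:E].

(* Lagrangian function of the hull relaxation, dualizing x = v_k *)
Definition HRLag (K : nat) (c : vec) (F : 'I_K -> set vec)
   (lam : 'I_K -> vec) : \bar R :=
  ereal_inf [set e | exists (x : vec) (v : 'I_K -> vec),
     (forall k, clconv (F k) (v k)) /\
     e = (dotv (c - \sum_(k < K) lam k) x + \sum_(k < K) dotv (lam k) (v k))%:E].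

Definition optimal_multipliers (K : nat) (c : vec) (F : 'I_K -> set vec)
   (lam : 'I_K -> vec) : Prop :=
  zHR c F \is a fin_num /\ zHR c F = HRLag c F lam.

Definition LR (K : nat) (c : vec) (F : 'I_K -> set vec)
   (lam : 'I_K -> vec) : \bar R :=
  ereal_inf [set e | exists (x : vec) (v : 'I_K -> vec),
     (forall k, F k (v k)) /\
     e = (dotv (c - \sum_(k < K) lam k) x + \sum_(k < K) dotv (lam k) (v k))%:E].

(* partition relaxation L_P(mu) for a partition P of 'I_K (a set of blocks);
   mu assigns a vector to each block; min over the empty set is +oo
   (ereal_inf set0 = +oo). *)
Definition Lpart (K : nat) (F : 'I_K -> set vec) (P : {set {set 'I_K}})
   (mu : {set 'I_K} -> vec) : \bar R :=
  (\sum_(J in P)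
     ereal_inf [set e | exists v : vec,
        (forall k, k \in J -> F k v) /\ e = (dotv (mu J) v)%:E])%E.

Definition zBasic (K : nat) (c : vec) (F : 'I_K -> set vec) (k0 l0 : 'I_K)
   : \bar R :=
  ereal_inf [set e | exists x : vec,
     (forall k, k != k0 -> k != l0 -> clconv (F k) x) /\
     clconv (F k0 `&` F l0) x /\ e = (dotv c x)%:E].

Definition basic_partition (K : nat) (k0 l0 : 'I_K) : {set {set 'I_K}} :=
  ([set [set k] | k in ~: [set k0; l0]] :|: [set [set k0; l0]])%SET.

End Defs.

From HB Require Import structures.
From mathcomp Require Import all_boot all_order all_algebra.
From mathcomp Require Import all_classical all_reals all_analysis.
From mathcomp Require Import lra.
Import Order.TTheory GRing.Theory Num.Theory.
Import numFieldNormedType.Exports.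
Set Implicit Arguments. Unset Strict Implicit. Unset Printing Implicit Defensive.
Local Open Scope ring_scope.

(** The optimality of the multipliers makes the hull Lagrangian finite, which
   forces [c = sum_k lam_k] (otherwise it is unbounded below along
   [c - sum_k lam_k]); since [F_k] lies in its closed convex hull,
   [z^HR = HRLag lam <= LR lam].  For any partition [P] of the disjunctions,
   [LR lam <= L_P mu] with [mu_J = sum_(k in J) lam_k], because restricting
   the [v_k] to be constant on each block can only raise the infimum.
   Conversely, a linear functional has the same infimum on a set and on its
   closed convex hull, so for every [x] feasible after the basic step each
   block minimum is at most [mu_J^T x]; summing, [L_P mu <= c^T x], whence
   [L_P mu <= z']. *)

Section Regrouping.
Variables (V : nmodType) (I : finType).

Lemma sum_pblock (P : {set {set I}}) (G : I -> {set I} -> V) :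
  finset.partition P [set: I] ->
  \sum_(J in P) \sum_(k in J) G k J = \sum_k G k (finset.pblock P k).
Proof.
case/and3P => /eqP covP tiP _.
transitivity (\sum_(J in P) \sum_(k in J) G k (finset.pblock P k)).
  apply: eq_bigr => J PJ; apply: eq_bigr => k kJ.
  by rewrite (def_pblock tiP PJ kJ).
by rewrite -finset.big_trivIset // covP; apply: eq_bigl => k; rewrite inE.
Qed.

End Regrouping.

Lemma partition_basic (K : nat) (k0 l0 : 'I_K) :
  finset.partition (basic_partition k0 l0) [set: 'I_K].
Proof.
have set1_in k : k \notin [set k0; l0] -> [set k] \in basic_partition k0 l0.
  move=> kB; rewrite inE; apply/orP; left; apply/imsetP.
  by exists k; rewrite ?finset.in_setC.
apply/and3P; split.
- apply/eqP/setP => k; rewrite inE; apply/bigcupP.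
  have [kB|kB] := boolP (k \in [set k0; l0]).
    by exists [set k0; l0]; rewrite // !inE eqxx orbT.
  by exists [set k]; rewrite ?set1_in // inE.
- apply/finset.trivIsetP => A B; rewrite !inE.
  move=> /orP[/imsetP[i iB ->]|/eqP->] /orP[/imsetP[j jB ->]|/eqP->] AB.
  + by rewrite disjoints1 inE; apply: contra AB => /eqP->.
  + by rewrite disjoints1; rewrite inE in iB.
  + by rewrite disjoint_sym disjoints1; rewrite inE in jB.
  + by rewrite eqxx in AB.
- rewrite !inE negb_or; apply/andP; split.
    by apply/imsetP => -[k _ /setP/(_ k)]; rewrite !inE eqxx.
  by apply/eqP => /setP/(_ k0); rewrite !inE eqxx.
Qed.

Local Open Scope classical_set_scope.

Section InfSum.
Variable R : realType.
Local Open Scope ereal_scope.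

Lemma ereal_inf_addr_ge (S : set \bar R) (s : \bar R) (a : R) :
  ereal_inf S != -oo -> s != -oo ->
  (forall e, S e -> a%:E <= e + s) -> a%:E <= ereal_inf S + s.
Proof.
move=> SNy; case: s => [t| |] // _ Sa; last by rewrite addey // leey.
rewrite -leeBlDr //; apply: le_ereal_inf_tmp => e Se.
by rewrite leeBlDr //; exact: Sa.
Qed.

Lemma ereal_inf_sum_ge (T : eqType) (V : Type) (v0 : V) (r : seq T)
    (P : T -> V -> Prop) (h : T -> V -> R) (b : T -> R) (a : R) :
  uniq r -> (forall i v, P i v -> (b i <= h i v)%R) ->
  (forall f : T -> V, (forall i, i \in r -> P i (f i)) ->
     (a <= \sum_(i <- r) h i (f i))%R) ->
  a%:E <= \sum_(i <- r) ereal_inf [set e | exists v, P i v /\ e = (h i v)%:E].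
Proof.
move=> + hb; pose g i := ereal_inf [set e | exists v, P i v /\ e = (h i v)%:E].
rewrite -/(\sum_(i <- r) g i).
have gb i : (b i)%:E <= g i.
  by apply: le_ereal_inf_tmp => _ [v [Pv ->]]; rewrite lee_fin; exact: hb.
have gNy i : g i != -oo by rewrite gt_eqF // (lt_le_trans (ltNyr (b i))).
have sumNy s : \sum_(i <- s) g i != -oo.
  rewrite gt_eqF // (lt_le_trans (ltNyr (\sum_(i <- s) b i)%R)) // -sumEFin.
  exact: lee_sum.
elim: r a => [a _ /(_ (fun=> v0)) ab|i r IH a /andP[ir ur] ha].
  by rewrite big_nil lee_fin; rewrite big_nil in ab; exact: ab.
rewrite big_cons; apply: ereal_inf_addr_ge; [exact: gNy | exact: sumNy |].
move=> _ [w [Pw ->]].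
rewrite -leeBlDl // -EFinB; apply: IH => // f Pf.
pose f' j := if j == i then w else f j.
have := ha f'; rewrite big_cons /f' eqxx.
rewrite (eq_big_seq (fun j => h j (f j))) => [hf'|j jr]; last first.
  by case: eqP => // ji; rewrite -ji jr in ir.
rewrite lerBlDl; apply: hf' => j; rewrite in_cons.
by case: eqP => [->|_] //= /Pf.
Qed.
End InfSum.

Section DotProduct.
Variables (R : realType) (n : nat).
Notation vec := 'rV[R]_n.

Lemma dotvDl (u w v : vec) : dotv (u + w) v = dotv u v + dotv w v.
Proof. by rewrite /dotv -big_split; apply: eq_bigr => i _; rewrite mxE mulrDl. Qed.

Lemma dotvDr (v u w : vec) : dotv v (u + w) = dotv v u + dotv v w.
Proof. by rewrite /dotv -big_split; apply: eq_bigr => i _; rewrite mxE mulrDr. Qed.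

Lemma dotv0l (v : vec) : dotv 0 v = 0.
Proof. by rewrite /dotv big1 // => i _; rewrite mxE mul0r. Qed.

Lemma dotv0r (v : vec) : dotv v 0 = 0.
Proof. by rewrite /dotv big1 // => i _; rewrite mxE mulr0. Qed.

Lemma dotvZr (v u : vec) (a : R) : dotv v (a *: u) = a * dotv v u.
Proof. by rewrite /dotv mulr_sumr; apply: eq_bigr => i _; rewrite mxE mulrCA. Qed.

Lemma dotv_suml (I : Type) (r : seq I) (P : pred I) (u : I -> vec) (v : vec) :
  dotv (\sum_(i <- r | P i) u i) v = \sum_(i <- r | P i) dotv (u i) v.
Proof. exact: (big_morph (fun w => dotv w v) (fun a b => dotvDl a b v) (dotv0l v)). Qed.

Lemma dotv_sumr (I : Type) (r : seq I) (P : pred I) (u : I -> vec) (v : vec) :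
  dotv v (\sum_(i <- r | P i) u i) = \sum_(i <- r | P i) dotv v (u i).
Proof. exact: (big_morph (dotv v) (dotvDr v) (dotv0r v)). Qed.

Lemma dotv_gt0 (d : vec) : d != 0 -> 0 < dotv d d.
Proof.
have sq_ge0 (y : R) : 0 <= y * y by rewrite -expr2 sqr_ge0.
move=> d_neq0; rewrite lt_def sumr_ge0 ?andbT => [|i _]; last exact: sq_ge0.
apply: contra d_neq0 => /eqP/(psumr_eq0P (fun i _ => sq_ge0 _)) dd0.
apply/eqP/matrixP => i j.
by rewrite mxE ord1; apply/eqP; move/eqP: (dd0 j isT); rewrite mulf_eq0 orbb.
Qed.

Lemma continuous_dotv (d : vec) : continuous (dotv d).
Proof.
rewrite /dotv => x; elim: (index_enum _) => [|i r IH].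
  rewrite (_ : (fun _ => _) = fun=> 0); last by apply: funext => y; rewrite big_nil.
  exact: cst_continuous.
rewrite (_ : (fun _ => _) = (fun y : vec => d 0 i * y 0 i) +
                            (fun y => \sum_(j <- r) d 0 j * y 0 j)).
  apply: continuousD => //; apply: continuousM; first exact: cst_continuous.
  exact: coord_continuous.
by apply: funext => y; rewrite big_cons.
Qed.

End DotProduct.

Section ClosedConvexHull.
Variables (R : realType) (n : nat).
Notation vec := 'rV[R]_n.
Implicit Types (A B : set vec) (d x : vec).

Lemma sub_clconv A : A `<=` clconv A.
Proof.
move=> a Aa; apply: subset_closure; exists 1%N, (fun=> 1), (fun=> a).
by rewrite !big_ord1 scale1r.
Qed.

Lemma clconvS A B : A `<=` B -> clconv A `<=` clconv B.
Proof.
move=> AB; apply: closureS => _ [m [w [p [w_ge0 [w1 [Ap ->]]]]]].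
by exists m, w, p; do 2 split=> //; split=> // i; exact: AB.
Qed.

Lemma clconv0 : clconv (@set0 vec) = set0.
Proof.
rewrite /clconv -[RHS]closure0; congr closure.
apply/seteqP; split=> // x [[|m] [w [p [_ [w1 [p0 _]]]]]]; last exact: p0 ord0.
by move: w1; rewrite big_ord0 => /eqP; rewrite eq_sym oner_eq0.
Qed.

Lemma clconv_dotv_ge A d (r : R) x :
  (forall a, A a -> r <= dotv d a) -> clconv A x -> r <= dotv d x.
Proof.
move=> Ar; have halfspace_closed : closed (dotv d @^-1` [set y | r <= y]).
  by apply: preimage_closed => [y _|]; [exact: continuous_dotv | exact: closed_ge].
have : conv_hull A `<=` dotv d @^-1` [set y | r <= y].
  move=> _ [m [w [p [w_ge0 [w1 [Ap ->]]]]]] /=.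
  rewrite dotv_sumr -[r]mul1r -w1 mulr_suml; apply: ler_sum => i _.
  by rewrite dotvZr ler_wpM2l ?Ar.
by move=> /closureS sub /sub; rewrite -(proj1 (closure_id _) halfspace_closed).
Qed.

Lemma ereal_inf_dotv_clconv A d x : clconv A x ->
  (ereal_inf [set e | exists v, A v /\ e = (dotv d v)%:E] <= (dotv d x)%:E)%E.
Proof.
move=> Ax; set S := [set e | _].
have S_lb a : A a -> (ereal_inf S <= (dotv d a)%:E)%E.
  by move=> Aa; apply: ereal_inf_lbound; exists a.
case E : (ereal_inf S) => [r| |]; last exact: leNye.
  rewrite lee_fin; apply: (clconv_dotv_ge _ Ax) => a /S_lb.
  by rewrite E lee_fin.
have [a Aa] : exists a, A a.
  by apply/set0P/eqP => A0; move: Ax; rewrite A0 clconv0.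
by have := S_lb a Aa; rewrite E.
Qed.

End ClosedConvexHull.

Section LagrangianRelaxation.
Variables (R : realType) (n K : nat) (c : 'rV[R]_n).
Variables (F : 'I_K -> set 'rV[R]_n) (lam : 'I_K -> 'rV[R]_n).

Lemma HRLagE : HRLag c F lam = LR c (fun k => clconv (F k)) lam.
Proof. by []. Qed.

Lemma le_LR (G : 'I_K -> set 'rV[R]_n) :
  (forall k, F k `<=` G k) -> (LR c G lam <= LR c F lam)%E.
Proof.
move=> FG; apply: ereal_inf_le_tmp => e [x [v [Fv ->]]].
by exists x, v; split=> // k; apply: FG.
Qed.

Lemma HRLag_le_LR : (HRLag c F lam <= LR c F lam)%E.
Proof. by rewrite HRLagE; apply: le_LR => k; exact: sub_clconv. Qed.

Lemma LR_le_sum_dotv (v : 'I_K -> 'rV[R]_n) : (forall k, F k (v k)) ->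
  (LR c F lam <= (\sum_k dotv (lam k) (v k))%:E)%E.
Proof.
by move=> Fv; apply: ereal_inf_lbound; exists 0, v; rewrite dotv0r add0r.
Qed.

Lemma LR_feasible : LR c F lam != +oo%E -> exists v, forall k, F k (v k).
Proof.
move=> LR_neq; apply: contrapT => nv; apply: (negP LR_neq); apply/eqP.
by apply/ereal_inf_pinfty => e [x [v [Fv _]]]; case: nv; exists v.
Qed.

Lemma LR_fin_num_sum_lam : LR c F lam \is a fin_num -> c = \sum_k lam k.
Proof.
move=> LR_fin; have [v Fv] : exists v, forall k, F k (v k).
  by case/fin_numP: LR_fin => _ /LR_feasible.
apply/eqP; rewrite -subr_eq0; apply/negPn/negP => d_neq0.
set d := c - _ in d_neq0; set s := \sum_k dotv (lam k) (v k).
set r := fine (LR c F lam).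
have dd_gt0 := dotv_gt0 d_neq0.
(* along the ray t d the Lagrangian is t |d|^2 + s, unbounded below *)
have : (LR c F lam <= ((r - 1 - s) / dotv d d * dotv d d + s)%:E)%E.
  apply: ereal_inf_lbound; exists ((r - 1 - s) / dotv d d *: d), v.
  by rewrite dotvZr.
by rewrite divfK ?gt_eqF // -[LR c F lam](fineK LR_fin) lee_fin -/r; lra.
Qed.

End LagrangianRelaxation.

Lemma HRLag_fin_num_LR (R : realType) (n K : nat) (c : 'rV[R]_n)
    (F : 'I_K -> set 'rV[R]_n) (lam : 'I_K -> 'rV[R]_n) :
  HRLag c F lam \is a fin_num -> LR c F lam \is a fin_num.
Proof.
rewrite HRLagE => /fin_numP[HR_neqNy HR_neqy]; apply/fin_numP; split.
  apply: contra_neq HR_neqNy => LR_eqNy; apply/eqP; rewrite -leeNy_eq -LR_eqNy.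
  by rewrite -HRLagE HRLag_le_LR.
have [v Fv] := LR_feasible HR_neqy.
have /choice [u Fu] : forall k, exists a, F k a.
  by move=> k; apply/set0P/eqP => Fk0; move: (Fv k); rewrite Fk0 clconv0.
by rewrite lt_eqF // (le_lt_trans (LR_le_sum_dotv c lam Fu)) ?ltry.
Qed.

Section PartitionRelaxation.
Variables (R : realType) (n K : nat) (c : 'rV[R]_n).
Variables (F : 'I_K -> set 'rV[R]_n) (lam : 'I_K -> 'rV[R]_n).
Variables (P : {set {set 'I_K}}) (P_partition : finset.partition P [set: 'I_K]%SET).

Let mu (J : {set 'I_K}) := \sum_(k in J) lam k.

Lemma Lpart_le_dotv x :
  (forall J, J \in P -> clconv [set v | forall k, k \in J -> F k v] x) ->
  (Lpart F P mu <= (dotv (\sum_k lam k) x)%:E)%E.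
Proof.
move=> Px; apply: (@le_trans _ _ (\sum_(J in P) (dotv (mu J) x)%:E)%E).
  by apply: lee_sum => J PJ; exact: ereal_inf_dotv_clconv (Px J PJ).
rewrite sumEFin lee_fin dotv_suml -(sum_pblock (fun k _ => dotv (lam k) x) P_partition).
by under eq_bigr do rewrite dotv_suml.
Qed.

Lemma LR_le_Lpart : LR c F lam \is a fin_num -> (LR c F lam <= Lpart F P mu)%E.
Proof.
move=> LR_fin; have [u Fu] : exists u, forall k, F k (u k).
  by case/fin_numP: LR_fin => _ /LR_feasible.
set l := fine (LR c F lam).
have LR_le v : (forall k, F k (v k)) -> l <= \sum_k dotv (lam k) (v k).
  by move=> Fv; rewrite -lee_fin /l fineK //; exact: LR_le_sum_dotv.
rewrite -(fineK LR_fin) -/l /Lpart -big_enum /=.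
(* a block is bounded below by freezing the other coordinates at [u] *)
apply: (ereal_inf_sum_ge (T := {set 'I_K}) 0
          (b := fun J => l - \sum_(k | k \notin J) dotv (lam k) (u k)))
  => [|J v Jv|f Pf].
- exact: enum_uniq.
- have /LR_le : forall k, F k (if k \in J then v else u k).
    by move=> k; case: ifP => kJ; [exact: Jv | exact: Fu].
  rewrite (bigID (mem J)) /= /mu dotv_suml.
  rewrite (eq_bigr (fun k => dotv (lam k) v)) => [|k ->] //.
  rewrite [X in _ + X](eq_bigr (fun k => dotv (lam k) (u k))) => [|k /negbTE ->] //.
  by rewrite lerBlDr.
- case/and3P: P_partition => /eqP coverP _ _.
  rewrite big_enum /=; under eq_bigr do rewrite dotv_suml.
  (* evaluate LR at the point that is constant on each block *)
  rewrite sum_pblock //; apply: LR_le => k; apply: Pf.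
    by rewrite mem_enum finset.pblock_mem // coverP inE.
  by rewrite finset.mem_pblock coverP inE.
Qed.

End PartitionRelaxation.

Lemma Lpart_le_zBasic (R : realType) (n K : nat) (c : 'rV[R]_n)
    (F : 'I_K -> set 'rV[R]_n) (lam : 'I_K -> 'rV[R]_n) (k0 l0 : 'I_K) :
  c = \sum_k lam k ->
  (Lpart F (basic_partition k0 l0) (fun J => (\sum_(k in J) lam k)%R)
     <= zBasic c F k0 l0)%E.
Proof.
move=> ->; apply: le_ereal_inf_tmp => _ [x [xF [xF01 ->]]].
apply: (Lpart_le_dotv _ (partition_basic k0 l0)) => J.
rewrite !inE => /orP[/imsetP[j jB ->]|/eqP ->].
  move: jB; rewrite !inE negb_or => /andP[j0 j1].
  by apply: clconvS (xF j j0 j1) => v Fv k; rewrite inE => /eqP ->.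
by apply: clconvS xF01 => v [F0 F1] k; rewrite !inE => /orP[] /eqP ->.
Qed.

Theorem corollary1 (R : realType) (n K : nat) (c : 'rV[R]_n)
  (m : 'I_K -> nat) (C : forall k : 'I_K, 'I_(m k) -> set 'rV[R]_n)
  (lam : 'I_K -> 'rV[R]_n) (k0 l0 : 'I_K) :
  (2 <= K)%N ->
  (forall (k : 'I_K) (i : 'I_(m k)), compact (C k i)) ->
  (forall (k : 'I_K) (i : 'I_(m k)),
      convex_set (C k i : set (convex_lmodType 'rV[R]_n))) ->
  optimal_multipliers c (disj C) lam ->
  k0 != l0 ->
  let F := disj C in
  let Delta := (zBasic c F k0 l0 - zHR c F)%E in
  let Lval := Lpart F (basic_partition k0 l0)
                (fun J => \sum_(k in J) lam k) in
  (Lval - LR c F lam <= Delta)%E /\ (0 <= Lval - LR c F lam)%E.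
Proof.
move=> _ _ _ [zHR_fin zHR_E] _ F Delta Lval.
have HR_fin : HRLag c F lam \is a fin_num by rewrite -zHR_E.
have cE : c = \sum_k lam k by move: HR_fin; rewrite HRLagE => /LR_fin_num_sum_lam.
have LR_fin := HRLag_fin_num_LR HR_fin.
have zHR_le_LR : (zHR c F <= LR c F lam)%E by rewrite zHR_E HRLag_le_LR.
have LR_le_Lval : (LR c F lam <= Lval)%E.
  exact: LR_le_Lpart (partition_basic k0 l0) LR_fin.
split; last by rewrite suber_ge0.
by apply: leeB zHR_le_LR; exact: Lpart_le_zBasic.
Qed.
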